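(* For every integer $m\ge1$ and every $x\in I$, $$\sum_{i=0}^m\Big|x-\frac{i}{m}\Big|\,\big|b_{i-1,m-1}(x)-b_{i,m-1}(x)\big|=\frac1m.$$
   Context: $I=[0,1]$. $b_{i,m}(t)=\binom{m}{i}t^i(1-t)^{m-i}$ for $i\in\{0,\ldots,m\}$, with the convention $b_{-1,m-1}=b_{m,m-1}=0$. *)

From Stdlib Require Import Reals Lra Lia ZArith Bool.
Open Scope R_scope.

(* Bernstein basis polynomial b_{i,m}(t) = C(m,i) t^i (1-t)^(m-i) for
   0 <= i <= m, with integer index i so that the convention
   b_{-1,m-1} = b_{m,m-1} = 0 is built in: b is 0 outside 0 <= i <= m. *)
Definition bern (i : Z) (m : nat) (t : R) : R :=
  if andb (0 <=? i)%Z (i <=? Z.of_nat m)%Z then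
    C m (Z.to_nat i) * t ^ (Z.to_nat i) * (1 - t) ^ (m - Z.to_nat i)
  else 0.

From Stdlib Require Import Reals ZArith Lra Lia.
Open Scope R_scope.

(* Write m = n+1 and b_i = b_{i,n}(x).  For every 0 <= i <= m the
   product (x - i/m) (b_{i-1} - b_i) is nonpositive: at the ends this is a
   sign check, and in the interior the identity
   C(n,i) i = C(n,i-1) (m-i) gives
     (x - i/m)(b_{i-1} - b_i) = - C(n,i-1)/(i m) x^(i-1) (1-x)^(n-i) (i - m x)^2.
   Hence every summand equals (i/m - x) b_{i-1} - (i/m - x) b_i, and after
   shifting the index of the first part (b_{-1} = b_m = 0) the sum collapses
   to  sum_j ((j+1)/m - x - (j/m - x)) b_j = (1/m) sum_j b_j = 1/m,
   the Bernstein basis being a partition of unity. *)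

Lemma bern_in (n k : nat) (x : R) :
  (k <= n)%nat -> bern (Z.of_nat k) n x = C n k * x ^ k * (1 - x) ^ (n - k).
Proof.
  intros Hk. unfold bern. rewrite Nat2Z.id.
  replace ((0 <=? Z.of_nat k)%Z && (Z.of_nat k <=? Z.of_nat n)%Z)%bool with true;
    [reflexivity|].
  symmetry. apply andb_true_intro; split; apply Z.leb_le; lia.
Qed.

Lemma bern_above (n : nat) (x : R) : bern (Z.of_nat (S n)) n x = 0.
Proof.
  unfold bern. replace (Z.of_nat (S n) <=? Z.of_nat n)%Z with false.
  - now rewrite Bool.andb_false_r.
  - symmetry. apply Z.leb_gt. lia.
Qed.

Lemma bern_below (n : nat) (x : R) : bern (Z.of_nat 0 - 1) n x = 0.
Proof. reflexivity. Qed.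

Lemma bern_pred_succ (n k : nat) (x : R) :
  bern (Z.of_nat (S k) - 1) n x = bern (Z.of_nat k) n x.
Proof. now replace (Z.of_nat (S k) - 1)%Z with (Z.of_nat k) by lia. Qed.

(* The Bernstein basis of degree n is a partition of unity
   (binomial theorem applied to (x + (1-x))^n). *)
Lemma bern_sum_one (n : nat) (x : R) :
  sum_f_R0 (fun k => bern (Z.of_nat k) n x) n = 1.
Proof.
  rewrite (sum_eq _ (fun k => C n k * x ^ k * (1 - x) ^ (n - k)))
    by (intros k Hk; now apply bern_in).
  rewrite <- binomial. replace (x + (1 - x)) with 1 by ring. apply pow1.
Qed.

(* The algebraic heart of the sign lemma: with c, q >= 0 and K, P > 0,
   (x - K/(K+P)) (c q (1-x) - c (P/K) q x) = - c q/(K(K+P)) (K - (K+P) x)^2. *)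
Lemma jump_sign_interior (c q x K P : R) :
  0 <= c -> 0 <= q -> 0 < K -> 0 < P ->
  (x - K / (K + P)) * (c * q * (1 - x) - c * (P / K) * q * x) <= 0.
Proof.
  intros Hc Hq HK HP.
  replace ((x - K / (K + P)) * (c * q * (1 - x) - c * (P / K) * q * x))
    with (- (c * q / (K * (K + P))) * (K - (K + P) * x) ^ 2)
    by (field; lra).
  assert (Hcoef : 0 <= c * q / (K * (K + P))).
  { apply Rmult_le_pos; [nra|]. apply Rlt_le, Rinv_0_lt_compat. nra. }
  assert (Hsq : 0 <= (K - (K + P) * x) ^ 2) by apply pow2_ge_0.
  nra.
Qed.

(* Sign lemma: for x in [0,1] and 0 <= i <= n+1, the jump b_{i-1,n} - b_{i,n}
   has the sign of i/(n+1) - x.  This lets us remove the absolute values. *)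
Lemma bern_jump_sign (n i : nat) (x : R) :
  0 <= x <= 1 -> (i <= S n)%nat ->
  (x - INR i / INR (S n)) * (bern (Z.of_nat i - 1) n x - bern (Z.of_nat i) n x)
  <= 0.
Proof.
  intros Hx Hi. assert (HN : 0 < INR (S n)) by (apply lt_0_INR; lia).
  destruct i as [|k].
  - rewrite bern_below, bern_in, Nat.sub_0_r by lia.
    replace (C n 0) with 1
      by (unfold C; rewrite Nat.sub_0_r; simpl; field; apply INR_fact_neq_0).
    assert (0 <= (1 - x) ^ n) by (apply pow_le; lra).
    replace (INR 0 / INR (S n)) with 0 by (rewrite Rdiv_0_l; reflexivity).
    simpl. nra.
  - rewrite bern_pred_succ.
    destruct (Nat.eq_dec k n) as [-> | Hkn].
    + rewrite bern_above, bern_in, Nat.sub_diag by lia.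
      replace (C n n) with 1
        by (unfold C; rewrite Nat.sub_diag; simpl; field; apply INR_fact_neq_0).
      replace (INR (S n) / INR (S n)) with 1 by (field; lra).
      assert (0 <= x ^ n) by (apply pow_le; lra).
      simpl. nra.
    + (* interior: write n - k = p + 1 and use C(n,k+1) = (n-k)/(k+1) C(n,k) *)
      set (p := (n - S k)%nat).
      rewrite !bern_in by lia. fold p.
      rewrite (pascal_step3 n k) by lia.
      replace (n - k)%nat with (S p) by (unfold p; lia).
      replace (INR (S n)) with (INR (S k) + INR (S p))
        by (rewrite <- plus_INR; f_equal; unfold p; lia).
      replace (C n k * x ^ k * (1 - x) ^ S p
               - INR (S p) / INR (S k) * C n k * x ^ S k * (1 - x) ^ p)
        with (C n k * (x ^ k * (1 - x) ^ p) * (1 - x)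
              - C n k * (INR (S p) / INR (S k)) * (x ^ k * (1 - x) ^ p) * x)
        by (simpl; ring).
      apply jump_sign_interior.
      * unfold C. apply Rmult_le_pos; [apply pos_INR|].
        apply Rlt_le, Rinv_0_lt_compat, Rmult_lt_0_compat; apply INR_fact_lt_0.
      * apply Rmult_le_pos; apply pow_le; lra.
      * apply lt_0_INR. lia.
      * apply lt_0_INR. lia.
Qed.

Lemma sum_shift_difference (f g : nat -> R) (N : nat) :
  f 0%nat = 0 -> g (S N) = 0 ->
  sum_f_R0 (fun i => f i - g i) (S N) = sum_f_R0 (fun j => f (S j) - g j) N.
Proof.
  intros Hf Hg.
  rewrite !minus_sum, (decomp_sum f (S N)), (tech5 g N) by lia.
  simpl pred. rewrite Hf, Hg. ring.
Qed.

Theorem mainTheorem6 (m : nat) (x : R) :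
  (1 <= m)%nat -> 0 <= x <= 1 ->
  sum_f_R0
    (fun i : nat =>
       Rabs (x - INR i / INR m) *
       Rabs (bern (Z.of_nat i - 1) (m - 1) x - bern (Z.of_nat i) (m - 1) x))
    m
  = 1 / INR m.
Proof.
  intros Hm Hx. destruct m as [|n]; [lia|].
  replace (S n - 1)%nat with n by lia.
  assert (HN : 0 < INR (S n)) by (apply lt_0_INR; lia).
  set (f := fun i => (INR i / INR (S n) - x) * bern (Z.of_nat i - 1) n x).
  set (g := fun i => (INR i / INR (S n) - x) * bern (Z.of_nat i) n x).
  rewrite (sum_eq _ (fun i => f i - g i)).
  2:{ intros i Hi. rewrite <- Rabs_mult, Rabs_left1 by (now apply bern_jump_sign).
      unfold f, g. ring. }
  rewrite sum_shift_difference.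
  2: unfold f; rewrite bern_below; ring.
  2: unfold g; rewrite bern_above; ring.
  rewrite (sum_eq _ (fun j => bern (Z.of_nat j) n x * (1 / INR (S n)))).
  2:{ intros j Hj. unfold f, g. rewrite bern_pred_succ, !S_INR.
      rewrite S_INR in HN. field. lra. }
  rewrite <- scal_sum, bern_sum_one. ring.
Qed.
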